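(* If $G$ is a split graph, then $\gamma_{\rm i}(G)=\alpha(G)$.
   Context: A graph is split if its vertex set can be partitioned into a clique and an independent set. $\alpha(G)$ is the independence number. Indicated domination game on $G$: two players, Dominator and Staller, alternate. In each round Dominator indicates a vertex $v$ not yet dominated by the vertices previously selected by Staller (a vertex dominates itself and its neighbors), and Staller must select a vertex of the closed neighborhood $N[v]$, adding it to a set $D$. The game ends when $D$ is a dominating set of $G$. Dominator wants to minimize $|D|$ and Staller to maximize it; the size of $D$ under optimal play of both is the indicated domination number $\gamma_{\rm i}(G)$. *)

(* A finite simple graph = symmetric irreflexive relation
   e on a finType T. *)
From mathcomp Require Import all_boot.
Set Implicit Arguments. Unset Strict Implicit. Unset Printing Implicit Defensive.

Section Graph.
Variables (T : finType) (e : rel T).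

Definition cnbhd (v : T) : {set T} := [set u | (u == v) || e v u].

Definition dominated (D : {set T}) (v : T) : bool := [exists u in D, u \in cnbhd v].

Definition dominating (D : {set T}) : bool := [forall v, dominated D v].

Definition is_clique (K : {set T}) : bool :=
  [forall x in K, forall y in K, (x != y) ==> e x y].

Definition is_independent (S : {set T}) : bool :=
  [forall x in S, forall y in S, ~~ e x y].

Definition is_split : Prop :=
  exists K I : {set T},
    [/\ K :|: I = setT, K :&: I = set0, is_clique K & is_independent I].

Definition alpha : nat := \max_(S : {set T} | is_independent S) #|S|.

(* Value of the indicated domination game from position D (the set of
   vertices already selected by Staller), with fuel n.  Dominator (min)
   indicates an undominated vertex v, Staller (max) selects u in N[v].
   Each move adds a new vertex to D, so fuel #|T| suffices; the minn
   default #|T| is never used since a non-dominating D leaves an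
   undominated vertex, and N[v] is nonempty. *)
Fixpoint game_value (n : nat) (D : {set T}) : nat :=
  match n with
  | 0 => #|D|
  | n'.+1 =>
      if dominating D then #|D|
      else \big[minn/#|T|]_(v | ~~ dominated D v)
             \max_(u in cnbhd v) game_value n' (u |: D)
  end.

Definition gamma_i : nat := game_value #|T| set0.

End Graph.

(* Staller can force at least alpha(G) moves in any graph: she fixes a maximum
   independent set S, which is dominating, and always answers inside S; every
   answer is new, and D, being a subset of the independent set S, dominates S
   only once D = S.
   In a split graph with clique K and independent set I, Dominator first
   indicates undominated vertices of I; each of them gets dominated by the
   answer, so |D| never exceeds the number of dominated vertices of I.  Once
   all of I is dominated but some w in K is not, no vertex of K has been
   chosen, so D = I; then w has no neighbour in I, so I + w is independent,
   and any answer in N[w] lies in K and ends the game with |I| + 1 <= alpha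
   vertices. *)
From mathcomp Require Import all_boot all_order.
Set Implicit Arguments. Unset Strict Implicit. Unset Printing Implicit Defensive.
Import Order.TTheory.

Lemma setC_disjoint_cover (T : finType) (A B : {set T}) :
  A :|: B = setT -> A :&: B = set0 -> A = ~: B.
Proof.
move=> /setP AUB /setP AIB; apply/setP => x.
by move: (AUB x) (AIB x); rewrite !inE; case: (x \in A); case: (x \in B).
Qed.

Section Graph.
Variables (T : finType) (e : rel T).
Implicit Types (A D K S : {set T}) (u v w x : T).

Lemma cnbhd_refl v : v \in cnbhd e v.
Proof. by rewrite inE eqxx. Qed.

Lemma undominated_notin D u v :
  ~~ dominated e D v -> u \in cnbhd e v -> u \notin D.
Proof. by move=> vnd uv; apply: contra vnd => uD; apply/exists_inP; exists u. Qed.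

Lemma dominatedS D (D' : {set T}) v : D \subset D' -> dominated e D v -> dominated e D' v.
Proof. by move=> /subsetP DD' /exists_inP[u /DD' uD' uv]; apply/exists_inP; exists u. Qed.

Lemma independentP S : reflect {in S &, forall x y, ~~ e x y} (is_independent e S).
Proof.
apply: (iffP forall_inP) => [indS x y xS yS | indS x xS].
  exact: forall_inP (indS x xS) y yS.
by apply/forall_inP => y; apply: indS.
Qed.

Lemma cliqueP K : reflect {in K &, forall x y, x != y -> e x y} (is_clique e K).
Proof.
apply: (iffP forall_inP) => [clK x y xK yK | clK x xK].
  exact/implyP/(forall_inP (clK x xK) y yK).
by apply/forall_inP => y yK; apply/implyP; apply: clK.
Qed.

Lemma mem_dominated_independent S D s :
  is_independent e S -> D \subset S -> s \in S -> dominated e D s -> s \in D.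
Proof.
move=> /independentP indS /subsetP DS sS /exists_inP[u uD].
rewrite inE => /orP[/eqP <- // | esu].
by have := indS s u sS (DS u uD); rewrite esu.
Qed.

Lemma card_dominatedU1 A D u v :
  v \in A -> ~~ dominated e D v -> u \in cnbhd e v ->
  #|A :&: [set x | dominated e D x]| < #|A :&: [set x | dominated e (u |: D) x]|.
Proof.
move=> vA vnd uv; apply: proper_card; apply/properP; split.
  apply/subsetP => x; rewrite !inE => /andP[-> /=].
  by apply: dominatedS; apply: subsetUr.
exists v; last by rewrite !inE vA.
by rewrite !inE vA /=; apply/exists_inP; exists u; rewrite ?setU11.
Qed.

Lemma game_value_dominating n D : dominating e D -> game_value e n D = #|D|.
Proof. by case: n => //= n ->. Qed.

Lemma game_valueS n D : ~~ dominating e D ->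
  game_value e n.+1 D =
  \big[minn/#|T|]_(v | ~~ dominated e D v) \max_(u in cnbhd e v) game_value e n (u |: D).
Proof. by move=> /negbTE /= ->. Qed.

Lemma game_value_le_indicate n D v : ~~ dominated e D v ->
  game_value e n.+1 D <= \max_(u in cnbhd e v) game_value e n (u |: D).
Proof.
move=> vnd; rewrite game_valueS; last by apply/forallP => /(_ v); apply/negP.
exact: (bigmin_le_cond (T := nat)).
Qed.

Lemma independent_dominating_le_game_value S n D :
  is_independent e S -> dominating e S -> D \subset S -> #|S| <= #|D| + n ->
  #|S| <= game_value e n D.
Proof.
move=> indS domS; elim: n D => [|n IHn] D DS le_S; first by rewrite addn0 in le_S.
have [domD | ndomD] := boolP (dominating e D).
  rewrite game_value_dominating //; apply/subset_leq_card/subsetP => s sS.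
  exact: mem_dominated_independent indS DS sS (forallP domD s).
rewrite game_valueS //; apply: (le_bigmin (T := nat)) => [|v vnd]; first exact: max_card.
have /exists_inP[s sS sv] := forallP domS v.
apply: leq_trans (leq_bigmax_cond _ sv); apply: IHn.
  by rewrite subUset sub1set sS.
by rewrite cardsU1 (undominated_notin vnd sv) add1n addSnnS.
Qed.

Lemma card_independent_le_alpha S : is_independent e S -> #|S| <= alpha e.
Proof. exact: (@leq_bigmax_cond _ (is_independent e) (fun S => #|S|)). Qed.

Lemma exists_maximum_independent : exists2 S, is_independent e S & #|S| = alpha e.
Proof.
have : 0 < #|is_independent e|.
  by apply/card_gt0P; exists set0; rewrite unfold_in; apply/independentP => x; rewrite inE.
by case/(eq_bigmax_cond (fun S : {set T} => #|S|)) => S indS /esym alphaS; exists S.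
Qed.

Section SimpleGraph.
Hypotheses (e_sym : symmetric e) (e_irr : irreflexive e).

Lemma independentU1 S x :
  is_independent e S -> ~~ dominated e S x -> is_independent e (x |: S).
Proof.
move=> /independentP indS xnd; apply/independentP.
have nxS s : s \in S -> ~~ e x s.
  by move=> sS; apply: contra xnd => exs; apply/exists_inP; exists s; rewrite // inE exs orbT.
move=> y z; rewrite !inE => /orP[/eqP -> | yS] /orP[/eqP -> | zS].
- by rewrite e_irr.
- exact: nxS.
- by rewrite e_sym; apply: nxS.
- exact: indS.
Qed.

Lemma maximum_independent_dominating S :
  is_independent e S -> #|S| = alpha e -> dominating e S.
Proof.
move=> indS Salpha; apply/forallP => x; apply: contraT => xnd.
have := card_independent_le_alpha (independentU1 indS xnd).
by rewrite cardsU1 (undominated_notin xnd (cnbhd_refl x)) Salpha ltnn.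
Qed.

Lemma alpha_le_gamma_i : alpha e <= gamma_i e.
Proof.
have [S indS Salpha] := exists_maximum_independent.
rewrite -Salpha; apply: independent_dominating_le_game_value (sub0set S) _ => //.
  exact: maximum_independent_dominating.
by rewrite cards0 max_card.
Qed.

Section Split.
Variable I : {set T}.
Hypotheses (indI : is_independent e I) (clIC : is_clique e (~: I)).

Let adjIC : {in ~: I &, forall x y, x != y -> e x y}.
Proof. exact/cliqueP. Qed.

Lemma split_undominated_eq D w :
  {in I, forall i, dominated e D i} -> ~~ dominated e D w -> D = I.
Proof.
move=> domI wnd.
have wI : w \notin I by apply: contra wnd; apply: domI.
have DI : D \subset I.
  apply/subsetP => k kD; apply: contraT => kI.
  have kw : w != k by apply: contraNneq (undominated_notin wnd (cnbhd_refl w)) => ->.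
  suff : dominated e D w by rewrite (negbTE wnd).
  by apply/exists_inP; exists k; rewrite // inE adjIC ?orbT // inE.
apply/eqP; rewrite eqEsubset DI; apply/subsetP => i iI.
exact: mem_dominated_independent indI DI iI (domI i iI).
Qed.

Lemma split_dominatingU1 u : u \notin I -> dominating e (u |: I).
Proof.
move=> uI; apply/forallP => x; apply/exists_inP.
have [xI | xI] := boolP (x \in I); first by exists x; rewrite ?cnbhd_refl // inE xI orbT.
exists u; first exact: setU11.
have [-> | ux] := eqVneq u x; first exact: cnbhd_refl.
by rewrite inE adjIC ?orbT // ?inE // eq_sym.
Qed.

Lemma split_endgame_value n w :
  ~~ dominated e I w -> game_value e n.+1 I <= alpha e.
Proof.
move=> wnd; apply: leq_trans (game_value_le_indicate _ wnd) _.
apply/bigmax_leqP => u uw; have uI := undominated_notin wnd uw.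
rewrite game_value_dominating ?split_dominatingU1 // cardsU1 uI.
have := card_independent_le_alpha (independentU1 indI wnd).
by rewrite cardsU1 (undominated_notin wnd (cnbhd_refl w)).
Qed.

Lemma split_game_value_le_alpha n D :
  #|D| <= #|I :&: [set x | dominated e D x]| -> game_value e n D <= alpha e.
Proof.
have le_alpha D' : #|D'| <= #|I :&: [set x | dominated e D' x]| -> #|D'| <= alpha e.
  move=> /leq_trans; apply; apply: leq_trans (card_independent_le_alpha indI).
  exact/subset_leq_card/subsetIl.
elim: n D => [|n IHn] D invD; first exact: le_alpha.
have [domD | ndomD] := boolP (dominating e D).
  by rewrite game_value_dominating // le_alpha.
have [v /andP[vI vnd] | domI] := pickP [pred v in I | ~~ dominated e D v].
  apply: leq_trans (game_value_le_indicate _ vnd) _; apply/bigmax_leqP => u uv.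
  apply: IHn; rewrite cardsU1 (undominated_notin vnd uv) add1n.
  exact: leq_ltn_trans invD (card_dominatedU1 vI vnd uv).
have /forallPn[w wnd] := ndomD.
suff DI : D = I by rewrite DI in wnd *; apply: split_endgame_value wnd.
by apply: split_undominated_eq wnd => i iI; move: (domI i); rewrite /= iI => /negbFE.
Qed.

Lemma split_gamma_i_le_alpha : gamma_i e <= alpha e.
Proof. by apply: split_game_value_le_alpha; rewrite cards0. Qed.

End Split.
End SimpleGraph.
End Graph.

Theorem proposition5p1 (T : finType) (e : rel T)
  (e_sym : symmetric e) (e_irr : irreflexive e) :
  is_split e -> gamma_i e = alpha e.
Proof.
case=> K [I] [KUI KII clK indI]; rewrite (setC_disjoint_cover KUI KII) in clK.
apply/eqP; rewrite eqn_leq alpha_le_gamma_i // andbT.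
exact: split_gamma_i_le_alpha clK.
Qed.
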